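(* Let $A$ be a block tridiagonal matrix satisfying the standing hypotheses (H), write $A^{-1}=[Z_{ij}]$ with $Z_{ij}\in\mathbb{C}^{m\times m}$, and let $\tau_{i,t},\omega_{i,t}$ be as in the context. Then for each $t=1,\dots,n-1$: $$\|Z_{ij}\|\le\|Z_{jj}\|\prod_{k=i}^{j-1}\tau_{k,t}\quad\text{for all } i<j,\qquad \|Z_{ij}\|\le\|Z_{jj}\|\prod_{k=j+1}^{i}\omega_{k,t}\quad\text{for all } i>j,$$ and for $i=1,\dots,n$, $$\frac{\|I\|}{\|A_i\|+\tau_{i-1,t}\|C_{i-1}\|+\omega_{i+1,t}\|B_i\|}\le\|Z_{ii}\|,$$ and, whenever $\|A_i^{-1}\|^{-1}-\tau_{i-1,t}\|C_{i-1}\|-\omega_{i+1,t}\|B_i\|>0$, $$\|Z_{ii}\|\le\frac{\|I\|}{\|A_i^{-1}\|^{-1}-\tau_{i-1,t}\|C_{i-1}\|-\omega_{i+1,t}\|B_i\|},$$ where $C_0=B_n=0$ and $\tau_{0,t}=\omega_{n+1,t}=0$.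
   Context: $\|\cdot\|$ is a submultiplicative matrix norm on $\mathbb{C}^{m\times m}$, $n\ge 2$, and $A$ is block tridiagonal with diagonal blocks $A_1,\dots,A_n$, superdiagonal blocks $B_1,\dots,B_{n-1}$ (block $(i,i+1)$) and subdiagonal blocks $C_1,\dots,C_{n-1}$ (block $(i+1,i)$), all in $\mathbb{C}^{m\times m}$; set $C_0=B_n=0$. Standing hypotheses (H): $A$ is nonsingular; $B_i$ and $C_i$ are nonsingular for $i=1,\dots,n-1$; every $A_i$ is nonsingular and $\|A_i^{-1}C_{i-1}\|+\|A_i^{-1}B_i\|\le 1$ for $i=1,\dots,n$ (row block diagonal dominance); and $\|A_1^{-1}B_1\|<1$, $\|A_n^{-1}C_{n-1}\|<1$. For $i=1,\dots,n$: $\tau_i=\dfrac{\|A_i^{-1}B_i\|}{1-\|A_i^{-1}C_{i-1}\|}$, $\omega_i=\dfrac{\|A_i^{-1}C_{i-1}\|}{1-\|A_i^{-1}B_i\|}$. For $i=1,\dots,n$ and $t=1,\dots,n-1$ define recursively in $t$: $\tau_{i,t}=\tau_i$ if $t=1$; $\tau_{i,t}=\tau_{i,t-1}$ if $t>i$; otherwise $\tau_{i,t}=\dfrac{\|A_i^{-1}B_i\|}{1-\|A_i^{-1}C_{i-1}\|\,\tau_{i-1,t-1}}$. $\omega_{i,t}=\omega_i$ if $t=1$; $\omega_{i,t}=\omega_{i,t-1}$ if $n-t+1<i$; otherwise $\omega_{i,t}=\dfrac{\|A_i^{-1}C_{i-1}\|}{1-\|A_i^{-1}B_i\|\,\omega_{i+1,t-1}}$.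 *)

From HB Require Import structures.
From mathcomp Require Import all_boot all_order all_algebra.
Set Implicit Arguments. Unset Strict Implicit. Unset Printing Implicit Defensive.
Import Order.TTheory GRing.Theory Num.Theory.
Local Open Scope ring_scope.

Definition submult_mxnorm (C : numClosedFieldType) (m : nat) (N : 'M[C]_m -> C) : Prop :=
  [/\ forall X, 0 <= N X,
      forall X, N X = 0 -> X = 0,
      forall (c : C) X, N (c *: X) = `|c| * N X,
      forall X Y, N (X + Y) <= N X + N Y
    & forall X Y, N (X *m Y) <= N X * N Y].

(* Block (i,j) (0-based indices) of the block tridiagonal matrix whose blocks
   are given 1-based: diagonal Ad 1..n, superdiagonal Bd 1..n-1 (block (i,i+1)),
   subdiagonal Cd 1..n-1 (block (i+1,i)). *)
Definition tridiag_blk (C : numClosedFieldType) (m : nat)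
  (Ad Bd Cd : nat -> 'M[C]_m) (i j : nat) : 'M[C]_m :=
  if j == i then Ad i.+1
  else if j == i.+1 then Bd i.+1
  else if i == j.+1 then Cd j.+1
  else 0.

Definition blk_tridiag (C : numClosedFieldType) (m n : nat) (Ad Bd Cd : nat -> 'M[C]_m)
  : 'M[C]_(\sum_(i < n) m, \sum_(i < n) m) :=
  @mxblock C n n (fun _ => m) (fun _ => m) (fun i j => tridiag_blk Ad Bd Cd i j).

Definition blk (C : numClosedFieldType) (m n : nat)
  (Z : 'M[C]_(\sum_(i < n) m, \sum_(i < n) m)) (i j : 'I_n) : 'M[C]_m :=
  @submxblock C n n (fun _ => m) (fun _ => m) Z i j.

(* tau_{i,t}, 1-based i; a i = ||A_i^{-1} C_{i-1}||, b i = ||A_i^{-1} B_i||.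
   Convention tau_{0,t} = 0. *)
Fixpoint tau_it (C : numClosedFieldType) (a b : nat -> C) (t i : nat) : C :=
  if i == 0%N then 0 else
  match t with
  | 0%N => 0
  | t'.+1 =>
      if t' == 0%N then b i / (1 - a i)
      else if (i < t)%N then tau_it a b t' i
      else b i / (1 - a i * tau_it a b t' i.-1)
  end.

Fixpoint omega_it (C : numClosedFieldType) (n : nat) (a b : nat -> C) (t i : nat) : C :=
  if (n < i)%N then 0 else
  match t with
  | 0%N => 0
  | t'.+1 =>
      if t' == 0%N then a i / (1 - b i)
      else if ((n - t).+1 < i)%N then omega_it n a b t' i
      else a i / (1 - b i * omega_it n a b t' i.+1)
  end.

(* Write a_i = ||A_i^-1 C_(i-1)|| and b_i = ||A_i^-1 B_i||.  Reading A Z = I block by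
   block, column k of Z = A^-1 satisfies A_i Z_ik + B_i Z_(i+1)k + C_(i-1) Z_(i-1)k = 0
   off the diagonal, so w_i = ||Z_ik|| obeys w_i <= a_i w_(i-1) + b_i w_(i+1).  If the
   previous row already gives w_(i-1) <= u w_i, this yields w_i <= b_i / (1 - a_i u) w_(i+1):
   iterating from the top row (where a_1 = 0) is exactly the recursion defining tau_(i,t),
   and omega_(i,t) is the same recursion for the matrix read from the bottom.  Multiplying
   the ratios gives the off-diagonal bounds; on the diagonal the row identity, with the
   neighbours Z_(i-1)i and Z_(i+1)i bounded through tau and omega, gives both bounds on
   ||Z_ii||. *)

From HB Require Import structures.
From mathcomp Require Import all_boot all_order all_algebra.
From mathcomp Require Import zify.
Import Order.TTheory GRing.Theory Num.Theory.
Local Open Scope ring_scope.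

Section SubmultNorm.
Context {C : numClosedFieldType} {m : nat} {N : 'M[C]_m -> C}.
Hypothesis HN : submult_mxnorm N.

Lemma mxnorm_ge0 X : 0 <= N X.
Proof. by case: HN. Qed.

Lemma mxnormD X Y : N (X + Y) <= N X + N Y.
Proof. by case: HN. Qed.

Lemma mxnormM X Y : N (X *m Y) <= N X * N Y.
Proof. by case: HN. Qed.

Lemma mxnorm0 : N 0 = 0.
Proof. by case: HN => _ _ HZ _ _; rewrite -(scale0r 0) HZ normr0 mul0r. Qed.

Lemma mxnormN X : N (- X) = N X.
Proof. by case: HN => _ _ HZ _ _; rewrite -scaleN1r HZ normrN normr1 mul1r. Qed.

Lemma mxnorm_gt0 X : (0 < m)%N -> X \in unitmx -> 0 < N X.
Proof.
move=> m_gt0 Xu; rewrite lt_def mxnorm_ge0 andbT; apply/eqP => NX0.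
case: HN => _ HX _ _ _; move: (mxrank_unit Xu).
by rewrite (HX _ NX0) mxrank0 => m0; rewrite -m0 in m_gt0.
Qed.

End SubmultNorm.

Section BlockAlgebra.
Variables (C : numClosedFieldType) (m n : nat).
Implicit Types (X Y : 'M[C]_(\sum_(i < n) m)) (i j k : 'I_n).

Lemma blk_scalar1 i k : blk (1%:M : 'M[C]_(\sum_(i < n) m)) i k = if i == k then 1%:M else 0.
Proof.
apply/matrixP => r s; rewrite /blk /submxblock !mxE -val_eqE /= tagnat.eq_Rank.
by case: (i == k); rewrite !mxE.
Qed.

Lemma blk_mulmx X Y i k : blk (X *m Y) i k = \sum_j blk X i j *m blk Y j k.
Proof. by rewrite /blk -{1}(submxblockK X) -{1}(submxblockK Y) mul_mxblock mxblockK. Qed.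

Lemma blk_tridiagE (Ad Bd Cd : nat -> 'M[C]_m) i j :
  blk (blk_tridiag n Ad Bd Cd) i j = tridiag_blk Ad Bd Cd i j.
Proof. by rewrite /blk mxblockK. Qed.

End BlockAlgebra.

Lemma sum_ord_if_eq (V : nmodType) n (F : 'I_n.+1 -> V) c :
  \sum_(j < n.+1) (if (j : nat) == c then F j else 0) = if (c < n.+1)%N then F (inord c) else 0.
Proof.
rewrite -big_mkcond; case: ltnP => cn.
  by rewrite (big_pred1 (inord c)) // => j /=; rewrite -val_eqE /= inordK.
by rewrite big_pred0 // => j; apply: contraTF cn => /eqP <-; rewrite -ltnNge.
Qed.

Section TridiagRow.
Variables (C : numClosedFieldType) (m n : nat) (Ad Bd Cd : nat -> 'M[C]_m).
Hypotheses (C0 : Cd 0%N = 0) (Bn : Bd n.+1 = 0).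

Lemma tridiag_blk_mulE (i j : 'I_n.+1) (Y : 'M[C]_m) :
  tridiag_blk Ad Bd Cd i j *m Y =
    (if (j : nat) == i.-1 then Cd i *m Y else 0)
  + (if (j : nat) == i then Ad i.+1 *m Y else 0)
  + (if (j : nat) == i.+1 then Bd i.+1 *m Y else 0).
Proof.
rewrite /tridiag_blk; case: (eqVneq (j : nat) i) => [->|ji].
  rewrite (ltn_eqF (ltnSn i)) addr0.
  case: (nat_of_ord i) => [|i'] /=; first by rewrite C0 mul0mx add0r.
  by rewrite (gtn_eqF (ltnSn i')) add0r.
case: (eqVneq (j : nat) i.+1) => [->|ji1]; first by rewrite ifN ?add0r //; lia.
rewrite !addr0; case: (eqVneq (i : nat) j.+1) => [->|ij1] /=; first by rewrite eqxx.
by rewrite mul0mx ifN //; lia.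
Qed.

Lemma blk_tridiag_mul_row (Y : 'M[C]_(\sum_(i < n.+1) m)) (i k : 'I_n.+1) :
  blk (blk_tridiag n.+1 Ad Bd Cd *m Y) i k =
  Cd i *m blk Y (inord i.-1) k + Ad i.+1 *m blk Y i k + Bd i.+1 *m blk Y (inord i.+1) k.
Proof.
rewrite blk_mulmx; under eq_bigr do rewrite blk_tridiagE tridiag_blk_mulE.
have ilt := ltn_ord i.
rewrite !big_split /= !sum_ord_if_eq ltn_ord inord_val ifT; last by lia.
case: ltnP => // ni; have -> : i.+1 = n.+1 by lia.
by rewrite Bn mul0mx.
Qed.

End TridiagRow.

Lemma ratio_step (R : numFieldType) (a b u wm w wp : R) :
  0 <= a -> 0 <= b -> a + b <= 1 -> a < 1 -> 0 <= u <= 1 ->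
  w <= a * wm + b * wp -> a * wm <= a * (u * w) ->
  w <= b / (1 - a * u) * wp /\ 0 <= b / (1 - a * u) <= 1.
Proof.
move=> a0 b0 ab a1 /andP[u0 u1] hw hwm.
have au : a * u <= a by rewrite ler_piMr.
have D0 : 0 < 1 - a * u by rewrite subr_gt0 (le_lt_trans au).
split.
  rewrite mulrAC ler_pdivlMr // mulrBr mulr1 lerBlDr (mulrC w) -mulrA.
  by apply: le_trans hw _; rewrite addrC lerD2l.
apply/andP; split; first by rewrite divr_ge0 // ltW.
rewrite ler_pdivrMr // mul1r lerBrDr.
by apply: le_trans (lerD (lexx b) au) _; rewrite addrC.
Qed.

Lemma tau_itSS (C : numClosedFieldType) (a b : nat -> C) t p :
  tau_it a b t.+2 p.+1 =
  if (p.+1 < t.+2)%N then tau_it a b t.+1 p.+1 else b p.+1 / (1 - a p.+1 * tau_it a b t.+1 p).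
Proof. by []. Qed.

Section TauRatio.
Variables (C : numClosedFieldType) (a b w : nat -> C) (q : nat).
Hypotheses (a1 : a 1%N = 0) (w_ge0 : forall p, 0 <= w p).
Hypothesis ab_bound :
  forall p, (1 <= p < q)%N -> [/\ 0 <= a p, 0 <= b p, a p + b p <= 1 & a p < 1].
Hypothesis w_row : forall p, (1 <= p < q)%N -> w p <= a p * w p.-1 + b p * w p.+1.

Lemma tau_it_ratio t p : (1 <= t)%N -> (1 <= p < q)%N ->
  w p <= tau_it a b t p * w p.+1 /\ 0 <= tau_it a b t p <= 1.
Proof.
case: t => // t _; elim: t p => [|t IH] p.
  elim: p => // p IHp /andP[_ pq]; have [a0 b0 ab al1] := ab_bound p.+1 pq.
  have := @ratio_step _ (a p.+1) (b p.+1) 1 (w p) (w p.+1) (w p.+2).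
  rewrite mulr1; apply=> //; [by rewrite ler01 lexx | by apply: w_row; lia | ].
  case: p IHp pq {a0 b0 ab al1} => [|p] IHp pq; first by rewrite a1 !mul0r.
  have [wp /andP[_ tau1]] := IHp (ltnW pq).
  rewrite mul1r; apply: ler_wpM2l; first by case: (ab_bound p.+2 pq).
  by apply: le_trans wp _; rewrite ler_piMl.
move=> /andP[p1 pq]; case: p p1 pq => // p _ pq; rewrite tau_itSS.
case: ltnP => pt; first by apply: IH; lia.
have [a0 b0 ab al1] := ab_bound p.+1 pq.
have [wp tau01] := IH p ltac:(lia).
apply: (@ratio_step _ _ _ _ (w p)) => //; first by apply: w_row; lia.
by apply: ler_wpM2l.
Qed.

End TauRatio.

Lemma omega_it_tau_it (C : numClosedFieldType) n (a b : nat -> C) t i :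
  (t <= n)%N -> (0 < i)%N ->
  omega_it n a b t i = tau_it (fun j => b (n.+1 - j)%N) (fun j => a (n.+1 - j)%N) t (n.+1 - i).
Proof.
elim: t i => [|t IH] i tn i0 /=; first by rewrite !if_same.
case: (ltnP n i) => [ni|ni]; first by rewrite ifT // subn_eq0.
have -> : (n.+1 - i == 0)%N = false by apply/eqP; lia.
rewrite subKn; last by lia.
case: (eqVneq t 0%N) => // t0.
have -> : ((n - t.+1).+1 < i)%N = (n.+1 - i < t.+1)%N by apply/idP/idP; lia.
have t1n : (t <= n)%N by lia.
rewrite (IH i t1n i0) (IH i.+1 t1n (ltn0Sn i)).
by rewrite (_ : n.+1 - i.+1 = (n.+1 - i).-1)%N //; lia.
Qed.

Lemma omega_it_ratio (C : numClosedFieldType) n (a b w : nat -> C) q :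
  b n = 0 -> (forall p, 0 <= w p) ->
  (forall p, (q < p <= n)%N -> [/\ 0 <= a p, 0 <= b p, a p + b p <= 1 & b p < 1]) ->
  (forall p, (q < p <= n)%N -> w p <= a p * w p.-1 + b p * w p.+1) ->
  forall t p, (1 <= t <= n)%N -> (q < p <= n)%N ->
    w p <= omega_it n a b t p * w p.-1 /\ 0 <= omega_it n a b t p <= 1.
Proof.
move=> bn w_ge0 ab_bound w_row t p /andP[t1 tn] /andP[qp pn].
rewrite omega_it_tau_it //; last by lia.
have := @tau_it_ratio _ (fun j => b (n.+1 - j)%N) (fun j => a (n.+1 - j)%N)
  (fun j => w (n.+1 - j)%N) (n.+1 - q) _ _ _ _ t (n.+1 - p) t1.
rewrite subKn; last by lia.
rewrite (_ : n.+1 - (n.+1 - p).+1 = p.-1)%N; last by lia.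
apply; [by rewrite subn1 | by move=> p'; apply: w_ge0 | | | by lia].
- move=> p' hp'; have hp : (q < n.+1 - p' <= n)%N by lia.
  by have [] := ab_bound _ hp; split => //; rewrite addrC.
move=> p' hp'; have hp : (q < n.+1 - p' <= n)%N by lia.
have -> : (n.+1 - p'.-1 = (n.+1 - p').+1)%N by lia.
have -> : (n.+1 - p'.+1 = (n.+1 - p').-1)%N by lia.
by rewrite addrC; apply: w_row.
Qed.

Lemma ler_chain_up (R : numDomainType) (w r : nat -> R) i j :
  (forall p, (i <= p < j)%N -> w p <= r p * w p.+1 /\ 0 <= r p) -> (i <= j)%N ->
  w i <= w j * \prod_(i <= k < j) r k.
Proof.
elim: j => [|j IH] H; first by rewrite leqn0 => /eqP->; rewrite big_geq ?mulr1.
rewrite leq_eqVlt => /predU1P[->|ij]; first by rewrite big_geq ?mulr1.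
have P0 : 0 <= \prod_(i <= k < j) r k.
  by rewrite big_seq prodr_ge0 // => k; rewrite mem_index_iota => hk; case: (H k ltac:(lia)).
have [wj _] := H j ltac:(lia).
rewrite big_nat_recr //= (mulrC _ (r j)) mulrA (mulrC (w j.+1)).
apply: le_trans (IH (fun p hp => H p ltac:(lia)) ij) _.
exact: ler_wpM2r.
Qed.

Lemma ler_chain_down (R : numDomainType) (w r : nat -> R) i j :
  (forall p, (j < p <= i)%N -> w p <= r p * w p.-1 /\ 0 <= r p) -> (j <= i)%N ->
  w i <= w j * \prod_(j.+1 <= k < i.+1) r k.
Proof.
elim: i => [|i IH] H; first by rewrite leqn0 => /eqP->; rewrite big_geq ?mulr1.
rewrite leq_eqVlt => /predU1P[->|ji]; first by rewrite big_geq ?mulr1.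
have [wi ri] := H i.+1 ltac:(lia).
rewrite big_nat_recr //= (mulrC _ (r i.+1)) mulrA (mulrC (w j)) -mulrA.
apply: le_trans wi (ler_wpM2l ri _).
exact: IH (fun p hp => H p ltac:(lia)) ji.
Qed.

Lemma ler_wpdivrMr (F : numFieldType) (x y z : F) :
  0 <= z -> 0 <= x -> y <= x * z -> y / z <= x.
Proof.
rewrite le_eqVlt => /predU1P[<-|z0] x0 yxz; first by rewrite invr0 mulr0.
by rewrite ler_pdivrMr.
Qed.

Lemma ler_of_self_bound (F : numFieldType) (v w x s : F) :
  0 < v -> w <= v * (x + s * w) -> 0 < v^-1 - s -> w <= x / (v^-1 - s).
Proof.
move=> v0 hw D0; rewrite ler_pdivlMr // mulrBr lerBlDr (mulrC w s).
by rewrite ler_pdivrMr // (mulrC (_ + _)).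
Qed.

Section BlockTridiagInverse.
Variables (C : numClosedFieldType) (m n : nat) (N : 'M[C]_m -> C) (Ad Bd Cd : nat -> 'M[C]_m).
Hypotheses (HN : submult_mxnorm N) (m_gt0 : (0 < m)%N) (C0 : Cd 0%N = 0) (Bn : Bd n.+1 = 0).
Hypothesis A_unit : blk_tridiag n.+1 Ad Bd Cd \in unitmx.
Hypothesis BC_unit : forall i, (1 <= i < n.+1)%N -> Bd i \in unitmx /\ Cd i \in unitmx.
Hypothesis Ad_unit : forall i, (1 <= i <= n.+1)%N -> Ad i \in unitmx.

Let a i := N (invmx (Ad i) *m Cd i.-1).
Let b i := N (invmx (Ad i) *m Bd i).
Hypothesis ab_le1 : forall i, (1 <= i <= n.+1)%N -> a i + b i <= 1.

Let Z := blk (invmx (blk_tridiag n.+1 Ad Bd Cd)).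

Lemma blk_inv_row (i k : 'I_n.+1) :
  Cd i *m Z (inord i.-1) k + Ad i.+1 *m Z i k + Bd i.+1 *m Z (inord i.+1) k =
  if i == k then 1%:M else 0.
Proof. by rewrite -blk_scalar1 -(mulmxV A_unit) blk_tridiag_mul_row. Qed.

Lemma blk_inv_offdiag_le (i k : 'I_n.+1) : i != k ->
  N (Z i k) <= a i.+1 * N (Z (inord i.-1) k) + b i.+1 * N (Z (inord i.+1) k).
Proof.
move=> ik; have Au : Ad i.+1 \in unitmx by apply: Ad_unit; rewrite ltn_ord.
have : Ad i.+1 *m Z i k + (Cd i *m Z (inord i.-1) k + Bd i.+1 *m Z (inord i.+1) k) == 0.
  by rewrite addrCA addrA blk_inv_row (negbTE ik).
rewrite addr_eq0 => /eqP AZ.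
rewrite -[Z i k](mulKmx Au) AZ mulmxN mxnormN // mulmxDr !mulmxA.
apply: le_trans (mxnormD HN _ _) _.
by apply: lerD; apply: le_trans (mxnormM HN _ _) _; rewrite ler_wpM2r ?mxnorm_ge0.
Qed.

(* Column k of Z with 1-based row index p.  The values at p = 0 and p = n + 2 are junk
   ([inord] clamps or wraps the index), but they only ever meet a 1 = 0 and b (n + 1) = 0. *)
Let zcol (k : 'I_n.+1) p := N (Z (inord p.-1) k).

Lemma zcolE (i k : 'I_n.+1) : zcol k i.+1 = N (Z i k).
Proof. by rewrite /zcol /= inord_val. Qed.

Lemma zcol_row_le (k : 'I_n.+1) p : (1 <= p <= n.+1)%N -> p.-1 != k ->
  zcol k p <= a p * zcol k p.-1 + b p * zcol k p.+1.
Proof.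
move=> hp pk; have ip : (inord p.-1 : 'I_n.+1) = p.-1 :> nat by rewrite inordK //; lia.
have ik : (inord p.-1 : 'I_n.+1) != k by rewrite -val_eqE /= ip.
by have := blk_inv_offdiag_le _ _ ik; rewrite ip prednK //; lia.
Qed.

Lemma b_gt0 p : (1 <= p < n.+1)%N -> 0 < b p.
Proof.
move=> hp; have [Bu _] := BC_unit p hp; apply: mxnorm_gt0 m_gt0 _ => //.
by rewrite unitmx_mul unitmx_inv Bu Ad_unit //; lia.
Qed.

Lemma a_gt0 p : (2 <= p <= n.+1)%N -> 0 < a p.
Proof.
move=> hp; have [_ Cu] := BC_unit p.-1 ltac:(lia).
apply: mxnorm_gt0 m_gt0 _ => //.
by rewrite unitmx_mul unitmx_inv Cu Ad_unit //; lia.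
Qed.

Lemma zcol_ratio_up (k : 'I_n.+1) t p : (1 <= t)%N -> (1 <= p <= k)%N ->
  zcol k p <= tau_it a b t p * zcol k p.+1 /\ 0 <= tau_it a b t p <= 1.
Proof.
have kn := ltn_ord k; apply: (@tau_it_ratio _ a b (zcol k) k.+1).
- by rewrite /a /= C0 mulmx0 mxnorm0.
- by move=> p'; apply: mxnorm_ge0.
- move=> p' hp'; have hp1 : (1 <= p' <= n.+1)%N by lia.
  split; rewrite ?mxnorm_ge0 ?ab_le1 //.
  by apply: lt_le_trans (ab_le1 _ hp1); rewrite ltrDl b_gt0 //; lia.
- by move=> p' hp'; apply: zcol_row_le; lia.
Qed.

Lemma zcol_ratio_down (k : 'I_n.+1) t p : (1 <= t <= n.+1)%N -> (k.+1 < p <= n.+1)%N ->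
  zcol k p <= omega_it n.+1 a b t p * zcol k p.-1 /\ 0 <= omega_it n.+1 a b t p <= 1.
Proof.
apply: (@omega_it_ratio _ n.+1 a b (zcol k) k.+1).
- by rewrite /b Bn mulmx0 mxnorm0.
- by move=> p'; apply: mxnorm_ge0.
- move=> p' hp'; have hp1 : (1 <= p' <= n.+1)%N by lia.
  split; rewrite ?mxnorm_ge0 ?ab_le1 //.
  by apply: lt_le_trans (ab_le1 _ hp1); rewrite ltrDr a_gt0 //; lia.
- by move=> p' hp'; apply: zcol_row_le; lia.
Qed.

Lemma blk_inv_upper_le t (i j : 'I_n.+1) : (1 <= t)%N -> (i < j)%N ->
  N (Z i j) <= N (Z j j) * \prod_(i.+1 <= k < j.+1) tau_it a b t k.
Proof.
move=> t1 ij; rewrite -!zcolE; apply: ler_chain_up => [p hp|]; last by lia.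
have hp' : (1 <= p <= j)%N by lia.
by have [? /andP[? _]] := zcol_ratio_up j t p t1 hp'.
Qed.

Lemma blk_inv_lower_le t (i j : 'I_n.+1) : (1 <= t <= n.+1)%N -> (j < i)%N ->
  N (Z i j) <= N (Z j j) * \prod_(j.+2 <= k < i.+2) omega_it n.+1 a b t k.
Proof.
move=> ht ji; rewrite -!zcolE; apply: ler_chain_down => [p hp|]; last by lia.
have hp' : (j.+1 < p <= n.+1)%N by have := ltn_ord i; lia.
by have [? /andP[? _]] := zcol_ratio_down j t p ht hp'.
Qed.

Lemma tau_it_ge0 t (i : 'I_n.+1) : (1 <= t)%N -> 0 <= tau_it a b t i.
Proof.
move=> t1; case: (posnP i) => [->|i0]; first by case: t t1.
by have [_ /andP[]] := zcol_ratio_up i t i t1 ltac:(lia).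
Qed.

Lemma omega_it_ge0 t (i : 'I_n.+1) : (1 <= t <= n.+1)%N -> 0 <= omega_it n.+1 a b t i.+2.
Proof.
move=> ht; case: (ltnP i n) => [i_lt|i_ge].
  by have [_ /andP[]] := zcol_ratio_down i t i.+2 ht ltac:(lia).
have -> : i.+2 = n.+2 by have := ltn_ord i; lia.
by case: t ht => [|t] /=; rewrite ltnSn.
Qed.

Lemma blk_inv_prev_le t (i : 'I_n.+1) : (1 <= t)%N ->
  N (Cd i *m Z (inord i.-1) i) <= tau_it a b t i * N (Cd i) * N (Z i i).
Proof.
move=> t1; case: (posnP i) => [i0|i_gt0].
  by rewrite i0 C0 mul0mx mxnorm0 // mulr_ge0 ?mxnorm_ge0 // -i0 mulr_ge0 ?tau_it_ge0 ?mxnorm_ge0.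
apply: le_trans (mxnormM HN _ _) _; rewrite [_ * N (Cd i)]mulrC -mulrA.
rewrite ler_wpM2l ?mxnorm_ge0 // -(zcolE i i).
by have [] := zcol_ratio_up i t i t1 ltac:(lia).
Qed.

Lemma blk_inv_next_le t (i : 'I_n.+1) : (1 <= t <= n.+1)%N ->
  N (Bd i.+1 *m Z (inord i.+1) i) <= omega_it n.+1 a b t i.+2 * N (Bd i.+1) * N (Z i i).
Proof.
move=> ht; case: (ltnP i n) => [i_lt|i_ge].
  apply: le_trans (mxnormM HN _ _) _; rewrite [_ * N (Bd _)]mulrC -mulrA.
  rewrite ler_wpM2l ?mxnorm_ge0 // -(zcolE i i).
  by have [] := zcol_ratio_down i t i.+2 ht ltac:(lia).
have ei : i.+1 = n.+1 by have := ltn_ord i; lia.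
by rewrite ei Bn mul0mx !mxnorm0 // mulr0 mul0r.
Qed.

Lemma blk_inv_diag_ge t (i : 'I_n.+1) : (1 <= t <= n.+1)%N ->
  N 1%:M / (N (Ad i.+1) + tau_it a b t i * N (Cd i) + omega_it n.+1 a b t i.+2 * N (Bd i.+1))
    <= N (Z i i).
Proof.
move=> ht; have t1 : (1 <= t)%N by case/andP: ht.
have row := blk_inv_row i i; rewrite eqxx in row.
apply: ler_wpdivrMr; first by rewrite !addr_ge0 ?mulr_ge0 ?mxnorm_ge0 ?tau_it_ge0 ?omega_it_ge0.
  exact: mxnorm_ge0.
rewrite -row mulrC !mulrDl; apply: le_trans (mxnormD HN _ _) _.
apply: lerD; last exact: blk_inv_next_le.
apply: le_trans (mxnormD HN _ _) _; rewrite [X in _ <= X]addrC.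
by apply: lerD; [exact: blk_inv_prev_le | exact: mxnormM].
Qed.

Lemma blk_inv_diag_le t (i : 'I_n.+1) : (1 <= t <= n.+1)%N ->
  0 < (N (invmx (Ad i.+1)))^-1 - tau_it a b t i * N (Cd i)
      - omega_it n.+1 a b t i.+2 * N (Bd i.+1) ->
  N (Z i i) <= N 1%:M / ((N (invmx (Ad i.+1)))^-1 - tau_it a b t i * N (Cd i)
                         - omega_it n.+1 a b t i.+2 * N (Bd i.+1)).
Proof.
move=> ht D0; have t1 : (1 <= t)%N by case/andP: ht.
have Au : Ad i.+1 \in unitmx by apply: Ad_unit; rewrite ltn_ord.
have row := blk_inv_row i i; rewrite eqxx in row.
have AZ : Ad i.+1 *m Z i i = 1%:M - (Cd i *m Z (inord i.-1) i + Bd i.+1 *m Z (inord i.+1) i).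
  by apply/eqP; rewrite eq_sym subr_eq -row addrCA addrA.
rewrite -addrA -opprD in D0 *; apply: ler_of_self_bound D0.
  by apply: mxnorm_gt0 m_gt0 _; rewrite // unitmx_inv.
rewrite -{1}[Z i i](mulKmx Au) AZ; apply: le_trans (mxnormM HN _ _) _.
apply: ler_wpM2l; first exact: mxnorm_ge0.
apply: le_trans (mxnormD HN _ _) _; rewrite mxnormN // lerD2l mulrDl.
apply: le_trans (mxnormD HN _ _) _.
by apply: lerD; [exact: blk_inv_prev_le | exact: blk_inv_next_le].
Qed.

End BlockTridiagInverse.

Theorem theorem2p7 (C : numClosedFieldType) (m n : nat) (N : 'M[C]_m -> C)
  (Ad Bd Cd : nat -> 'M[C]_m) :
  submult_mxnorm N ->
  (0 < m)%N -> (2 <= n)%N ->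
  Cd 0%N = 0 -> Bd n = 0 ->
  blk_tridiag n Ad Bd Cd \in unitmx ->
  (forall i, (1 <= i < n)%N -> Bd i \in unitmx /\ Cd i \in unitmx) ->
  (forall i, (1 <= i <= n)%N ->
     Ad i \in unitmx /\
     N (invmx (Ad i) *m Cd i.-1) + N (invmx (Ad i) *m Bd i) <= 1) ->
  N (invmx (Ad 1%N) *m Bd 1%N) < 1 ->
  N (invmx (Ad n) *m Cd n.-1) < 1 ->
  let a := fun i => N (invmx (Ad i) *m Cd i.-1) in
  let b := fun i => N (invmx (Ad i) *m Bd i) in
  let tau := fun i t => tau_it a b t i in
  let omega := fun i t => omega_it n a b t i in
  let Z := blk (invmx (blk_tridiag n Ad Bd Cd)) in
  forall t, (1 <= t <= n.-1)%N ->
  (* blocks are indexed by 0-based ordinals i : 'I_n (block i is Z_{i+1,.}),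
     while tau, omega, Ad, Bd, Cd are 1-based *)
  [/\ (forall i j : 'I_n, (i < j)%N ->
         N (Z i j) <= N (Z j j) * \prod_(i.+1 <= k < j.+1) tau k t),
      (forall i j : 'I_n, (j < i)%N ->
         N (Z i j) <= N (Z j j) * \prod_(j.+2 <= k < i.+2) omega k t),
      (forall i : 'I_n,
         N 1%:M / (N (Ad i.+1) + tau i t * N (Cd i) + omega i.+2 t * N (Bd i.+1))
           <= N (Z i i))
    & (forall i : 'I_n,
         0 < (N (invmx (Ad i.+1)))^-1 - tau i t * N (Cd i) - omega i.+2 t * N (Bd i.+1) ->
         N (Z i i) <= N 1%:M / ((N (invmx (Ad i.+1)))^-1 - tau i t * N (Cd i)
                                - omega i.+2 t * N (Bd i.+1)))].
Proof.
case: n => [|n]; first by move=> _ _ n2.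
move=> HN m_gt0 _ C0 Bn A_unit BC_unit Had _ _ a b tau omega Z t /andP[t1 tn].
have Ad_unit i hi : Ad i \in unitmx := (Had i hi).1.
have ab_le1 i hi : a i + b i <= 1 := (Had i hi).2.
have ht : (1 <= t <= n.+1)%N by lia.
split=> [i j|i j|i|i].
- by apply: blk_inv_upper_le.
- by apply: blk_inv_lower_le.
- by apply: blk_inv_diag_ge.
- by apply: blk_inv_diag_le.
Qed.
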